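(* For each $\nu$, each $1\le i\le m$, each $1\le j<l\le N^\nu_i$ and all $\mathbf t,\mathbf u\ge\mathbf0$, $$0\le\mathrm{cov}(\chi^\nu_{i,j}(\mathbf t),\chi^\nu_{i,l}(\mathbf u))\le\sum_{k=1}^m(t_k\wedge u_k)\tilde N^\nu_k\lambda^\nu_{kii}$$ and $$\big|\mathrm{cov}(\chi^\nu_{i,j}(\mathbf t)-\chi^\nu_{i,j}(\mathbf u),\chi^\nu_{i,l}(\mathbf t)-\chi^\nu_{i,l}(\mathbf u))\big|\le 6\Big\{\sum_{k=1}^m\big([(t_k\vee u_k)\tilde N^\nu_k]-[(t_k\wedge u_k)\tilde N^\nu_k]\big)\mu^\nu_{ki}\Big\}\Big\{\sum_{k=1}^m(t_k\wedge u_k)\tilde N^\nu_k\lambda^\nu_{kii}\Big\}+2\sum_{k=1}^m\big([(t_k\vee u_k)\tilde N^\nu_k]-[(t_k\wedge u_k)\tilde N^\nu_k]\big)\lambda^\nu_{kii}.$$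
   Context: Fix $m\ge1$; $[x]$ is the integer part of $x$; sums/products over $1\le l\le x$ mean $1\le l\le[x]$. Fix $\nu$. Given integers $N^\nu_i\ge1$, $N^\nu=\sum_iN^\nu_i$, constants $\pi_i>0$, $\tilde N^\nu_k=N^\nu\pi_k$. Random vectors $\mathbf V^\nu_k=(V^\nu_{k,1},\dots,V^\nu_{k,m})\in[0,1]^m$; $\{\mathbf V^\nu_{(k,l)}:1\le k\le m,l\ge1\}$ independent with $\mathbf V^\nu_{(k,l)}\sim\mathbf V^\nu_k$ (infectivity vector of the $l$-th infective of type $k$). Individuals $(i,j)$, $1\le j\le N^\nu_i$. Conditionally on all infectivity vectors, the events ''infective $(k,l)$ contacts individual $(i,j)$'' are independent over all pairs with probabilities $V^\nu_{(k,l),i}$. For $\mathbf t=(t_1,\dots,t_m)\ge\mathbf0$, $\chi^\nu_{i,j}(\mathbf t)=1$ if $(i,j)$ is contacted by at least one infective $(k,l)$ with $1\le k\le m$, $1\le l\le t_k\tilde N^\nu_k$, and $0$ otherwise. $\mu^\nu_{ki}=\mathbb E[V^\nu_{k,i}]$, $\lambda^\nu_{kii}=\mathrm{var}(V^\nu_{k,i})$. $a\wedge b=\min$, $a\vee b=\max$. *)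

From HB Require Import structures.
From mathcomp Require Import all_boot all_order all_algebra.
From mathcomp Require Import all_classical all_reals all_analysis.
Set Implicit Arguments. Unset Strict Implicit. Unset Printing Implicit Defensive.
Import Order.TTheory GRing.Theory Num.Theory.
Local Open Scope classical_set_scope.
Local Open Scope ring_scope.

(* Conventions (0-indexed):
   - types are k, i : 'I_m;
   - the l-th infective of type k (paper: l >= 1) is indexed by l : nat,
     paper's infective (k, l+1);
   - individual (i, j) (paper: 1 <= j <= N_i) is indexed by j : nat, j < N i,
     paper's individual (i, j+1);
   - V k l i w  = V^nu_{(k,l+1),i}(w);
   - C k l i j w = "infective (k,l+1) contacts individual (i,j+1)". *)

Section Model.
Context {d : measure_display} {T : measurableType d} {R : realType}
  (P : probability T R) {m : nat}.

Definition Vevent (V : 'I_m -> nat -> 'I_m -> T -> R) (k : 'I_m) (l : nat)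
  (A : 'I_m -> set R) : set T := [set w | forall i, A i (V k l i w)].

Definition infectivity_vectors (V : 'I_m -> nat -> 'I_m -> T -> R) : Prop :=
  [/\ (forall k l i, measurable_fun setT (V k l i)),
      (forall k l i w, 0 <= V k l i w <= 1),
      (forall (F : seq ('I_m * nat)) (A : 'I_m -> nat -> 'I_m -> set R),
          uniq F -> (forall k l i, measurable (A k l i)) ->
          P [set w | forall p, p \in F -> Vevent V p.1 p.2 (A p.1 p.2) w]
          = (\prod_(p <- F) P (Vevent V p.1 p.2 (A p.1 p.2)))%E) &
      (forall k l (A : 'I_m -> set R), (forall i, measurable (A i)) ->
          P (Vevent V k l A) = P (Vevent V k 0 A))].

(* conditionally on all infectivity vectors, the contact events are
   independent with probabilities V_(k,l),i : for every finite family of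
   events on the vectors and every finite (duplicate-free) family of
   (infective, individual) pairs with prescribed outcomes b, *)
Definition contact_model (N : 'I_m -> nat) (V : 'I_m -> nat -> 'I_m -> T -> R)
  (C : 'I_m -> nat -> 'I_m -> nat -> T -> bool) : Prop :=
  (forall k l i j, measurable [set w | C k l i j w]) /\
  (forall (F : seq ('I_m * nat)) (A : 'I_m -> nat -> 'I_m -> set R)
          (S : seq (('I_m * nat) * ('I_m * nat)))
          (b : ('I_m * nat) * ('I_m * nat) -> bool),
      (forall k l i, measurable (A k l i)) -> uniq S ->
      (forall q, q \in S -> (q.2.2 < N q.2.1)%N) ->
      P [set w | (forall p, p \in F -> Vevent V p.1 p.2 (A p.1 p.2) w) /\
                 (forall q, q \in S -> C q.1.1 q.1.2 q.2.1 q.2.2 w = b q)]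
      = ('E_P[fun w =>
            ((\prod_(p <- F) \1_(Vevent V p.1 p.2 (A p.1 p.2)) w) *
            \prod_(q <- S) (if b q then V q.1.1 q.1.2 q.2.1 w
                            else 1 - V q.1.1 q.1.2 q.2.1 w))%R])%E).

End Model.

Definition Ntilde {R : realType} {m : nat} (N : 'I_m -> nat) (pi : 'I_m -> R)
  (k : 'I_m) : R := (\sum_(i < m) N i)%:R * pi k.

(* chi^nu_{i,j}(t): 1 if (i,j) is contacted by some infective (k,l) with
   1 <= l <= [t_k tilde N_k], i.e. 0-indexed l < [t_k tilde N_k] *)
Definition chi {d : measure_display} {T : measurableType d} {R : realType}
  {m : nat} (N : 'I_m -> nat) (pi : 'I_m -> R)
  (C : 'I_m -> nat -> 'I_m -> nat -> T -> bool) (i : 'I_m) (j : nat)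
  (t : 'I_m -> R) : T -> R :=
  \1_[set w | exists (k : 'I_m) (l : nat),
                (l < Num.truncn (t k * Ntilde N pi k))%N /\ C k l i j w].

Definition mu_ {d : measure_display} {T : measurableType d} {R : realType}
  (P : probability T R) {m : nat} (V : 'I_m -> nat -> 'I_m -> T -> R)
  (k i : 'I_m) : R := fine ('E_P[V k 0%N i])%E.
Definition lambda_ {d : measure_display} {T : measurableType d} {R : realType}
  (P : probability T R) {m : nat} (V : 'I_m -> nat -> 'I_m -> T -> R)
  (k i : 'I_m) : R := fine ('V_P[V k 0%N i])%E.

(* We have chi_{i,j}(t) = 1 - 1_{E_j(a)}, where E_j(a) is the event that
   individual (i,j) escapes the first a_k = [t_k Ntilde_k] infectives of each
   type k.  Given the infectivities the contacts are independent, and the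
   infectivity vectors are independent and identically distributed within a
   type, so P(E_j(a) & E_l(b)) = prod_k beta_k^(a_k /\ b_k) alpha_k^|a_k - b_k|
   with alpha_k = E(1 - V_{k,i}) = 1 - mu_ki and
   beta_k = E(1 - V_{k,i})^2 = alpha_k^2 + lambda_kii.  Both covariances are
   then explicit polynomials in the alpha_k, beta_k, and the bounds follow from
   0 <= prod x_k - prod y_k <= sum (x_k - y_k) for 0 <= y_k <= x_k <= 1; the
   bound obtained for the increments, sum |a_k - b_k| lambda_kii
   + (sum (a_k /\ b_k) lambda_kii)(sum |a_k - b_k| mu_ki), is sharper than the
   one stated.
   Independence of the infectivity vectors is only given as a product rule for
   events, so E prod_p f_p = prod_p E f_p for [0,1]-valued f_p is obtained by
   approximating each f_p from below by staircase functions on the grid 1/n,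
   whose products are combinations of indicators of rectangles. *)

From HB Require Import structures.
From mathcomp Require Import all_boot all_order all_algebra.
From mathcomp Require Import all_classical all_reals all_analysis.
From mathcomp Require Import measurable_realfun.
From mathcomp Require Import zify ring lra.
Set Implicit Arguments. Unset Strict Implicit. Unset Printing Implicit Defensive.
Import Order.TTheory GRing.Theory Num.Theory.
Local Open Scope classical_set_scope.
Local Open Scope ring_scope.

Section itv01_bounds.
Context {R : realDomainType}.

Lemma prodr_itv01 (I : Type) (s : seq I) (x : I -> R) :
  (forall p, 0 <= x p <= 1) -> 0 <= \prod_(p <- s) x p <= 1.
Proof.
move=> x01; elim: s => [|p s /andP[P0 P1]]; first by rewrite big_nil ler01 lexx.
have /andP[x0 x1] := x01 p.
by rewrite big_cons mulr_ge0//= mulr_ile1.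
Qed.

Lemma normr_prodrB_le (I : Type) (s : seq I) (x y : I -> R) :
  (forall p, 0 <= x p <= 1) -> (forall p, 0 <= y p <= 1) ->
  `|\prod_(p <- s) x p - \prod_(p <- s) y p| <= \sum_(p <- s) `|x p - y p|.
Proof.
move=> x01 y01; elim: s => [|p s IH]; first by rewrite !big_nil subrr normr0.
rewrite !big_cons.
have -> : x p * \prod_(q <- s) x q - y p * \prod_(q <- s) y q =
  x p * (\prod_(q <- s) x q - \prod_(q <- s) y q) + (x p - y p) * \prod_(q <- s) y q.
  by rewrite mulrBr mulrBl addrA subrK.
rewrite (le_trans (ler_normD _ _))// [in leRHS]addrC lerD//.
  have /andP[x0 x1] := x01 p.
  by rewrite normrM -[leRHS]mul1r ler_pM// ger0_norm.
have /andP[P0 P1] := prodr_itv01 s y01.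
by rewrite normrM -[leRHS]mulr1 ler_pM// ger0_norm.
Qed.

Lemma prodrB_ge0_le (I : Type) (s : seq I) (x y : I -> R) :
  (forall p, 0 <= y p <= x p) -> (forall p, x p <= 1) ->
  0 <= \prod_(p <- s) x p - \prod_(p <- s) y p <= \sum_(p <- s) (x p - y p).
Proof.
move=> yx x1; rewrite subr_ge0 ler_prod/=; last by move=> p _; exact: yx.
have x01 p : 0 <= x p <= 1.
  by have /andP[y0 /(le_trans y0) ->] := yx p; rewrite x1.
have y01 p : 0 <= y p <= 1.
  by have /andP[-> /le_trans ->] := yx p.
rewrite (le_trans (ler_norm _))// (le_trans (normr_prodrB_le s x01 y01))//.
by apply: ler_sum => p _; rewrite ger0_norm// subr_ge0; case/andP: (yx p).
Qed.

Lemma exprB_ge0_le (x y : R) n : 0 <= y <= x -> x <= 1 ->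
  0 <= x ^+ n - y ^+ n <= n%:R * (x - y).
Proof.
move=> /andP[y0 yx] x1; have x0 := le_trans y0 yx.
elim: n => [|n /andP[IH0 IH1]]; first by rewrite !expr0 subrr mul0r lexx.
have -> : x ^+ n.+1 - y ^+ n.+1 = x * (x ^+ n - y ^+ n) + (x - y) * y ^+ n.
  by rewrite !exprS; ring.
apply/andP; split; first by rewrite addr_ge0// mulr_ge0// ?subr_ge0// exprn_ge0.
rewrite mulr_natl mulrS -mulr_natl [leRHS]addrC lerD//.
  by rewrite (le_trans _ IH1)// ler_piMl.
by rewrite ler_piMr ?subr_ge0// exprn_ile1// (le_trans yx).
Qed.

Lemma prodrXB_ge0_le (I : Type) (s : seq I) (x y : I -> R) (n : I -> nat) :
  (forall p, 0 <= y p <= x p) -> (forall p, x p <= 1) ->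
  0 <= \prod_(p <- s) x p ^+ n p - \prod_(p <- s) y p ^+ n p <=
       \sum_(p <- s) (n p)%:R * (x p - y p).
Proof.
move=> yx x1.
have yxn p : 0 <= y p ^+ n p <= x p ^+ n p.
  have /andP[y0 yxp] := yx p.
  by rewrite exprn_ge0// lerXn2r// ?nnegrE// (le_trans y0).
have xn1 p : x p ^+ n p <= 1.
  by have /andP[y0 yxp] := yx p; rewrite exprn_ile1// (le_trans y0).
have /andP[-> le_sum] := prodrB_ge0_le s yxn xn1.
rewrite (le_trans le_sum)//; apply: ler_sum => p _.
by case/andP: (exprB_ge0_le (n p) (yx p) (x1 p)).
Qed.

Lemma sqrB_le_add_compl (x y : R) : 0 <= x <= 1 -> 0 <= y <= 1 ->
  (x - y) ^+ 2 <= (1 - x) + (1 - y).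
Proof. by move=> /andP[x0 x1] /andP[y0 y1]; case: (leP x y) => h; nra. Qed.

End itv01_bounds.

Lemma sum_ord_ltn {R : pzSemiRingType} (n K : nat) :
  \sum_(r < n) ((r < K)%N%:R : R) = (minn n K)%:R.
Proof.
elim: n => [|n IH]; first by rewrite big_ord0 min0n.
rewrite big_ord_recr /= IH -natrD; congr (_%:R).
by case: (ltnP n K) => h /=; lia.
Qed.

Lemma norm_le_divn_eq0 {R : archiRealFieldType} (x c : R) :
  (forall n, (0 < n)%N -> `|x| <= c / n%:R) -> x = 0.
Proof.
move=> le_div; apply/eqP; apply/negPn/negP => x_neq0.
have x_gt0 : 0 < `|x| by rewrite normr_gt0.
pose n := (Num.truncn (c / `|x|)).+1.
have := le_div n isT; rewrite ler_pdivlMr ?ltr0Sn// => le_c.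
have : c / `|x| < n%:R by rewrite /n truncnS_gt.
by rewrite ltr_pdivrMr// mulrC ltNge le_c.
Qed.

Section truncn.
Context {R : archiRealDomainType}.

Lemma truncn_min (x y : R) :
  Num.truncn (Num.min x y) = minn (Num.truncn x) (Num.truncn y).
Proof.
have [/le_truncn/minn_idPl|/ltW/le_truncn/minn_idPr] := leP x y; by [].
Qed.

Lemma truncn_max (x y : R) :
  Num.truncn (Num.max x y) = maxn (Num.truncn x) (Num.truncn y).
Proof.
have [/le_truncn/maxn_idPr|/ltW/le_truncn/maxn_idPl] := leP x y; by [].
Qed.

Lemma natr_truncn_maxB_min (x y : R) :
  (Num.truncn (Num.max x y))%:R - (Num.truncn (Num.min x y))%:R =
  ((Num.truncn x - Num.truncn y) + (Num.truncn y - Num.truncn x))%N%:R :> R.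
Proof.
rewrite truncn_max truncn_min -natrB; last by lia.
set X := Num.truncn x; set Y := Num.truncn y.
by rewrite (_ : maxn X Y - minn X Y = X - Y + (Y - X))%N //; lia.
Qed.

End truncn.

Lemma prod_ord_ltn2 {R : comPzSemiRingType} (g : nat -> R) a b L :
  g 0%N = 1 -> (a <= L)%N -> (b <= L)%N ->
  \prod_(r < L) g ((r < a) + (r < b))%N =
  g 2%N ^+ minn a b * g 1%N ^+ ((a - b) + (b - a)).
Proof.
wlog le_ab : a b / (a <= b)%N => [wlog_ab g0 aL bL|g0 aL bL].
  have /orP[le_ab|le_ba] := leq_total a b; first exact: wlog_ab.
  under eq_bigr do rewrite addnC.
  by rewrite wlog_ab// minnC addnC.
rewrite -(big_mkord xpredT (fun r => g ((r < a) + (r < b))%N)).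
rewrite (@big_cat_nat _ _ _ a 0 L)//= ?(leq_trans le_ab bL)// (@big_cat_nat _ _ _ b a L)//=.
rewrite (@eq_big_nat _ _ _ 0 a _ (fun=> g 2%N)) => [|r /andP[_ ra]]; last first.
  by rewrite ra (leq_trans ra le_ab).
rewrite (@eq_big_nat _ _ _ a b _ (fun=> g 1%N)) => [|r /andP[ar rb]]; last first.
  by rewrite rb ltnNge ar.
rewrite (@eq_big_nat _ _ _ b L _ (fun=> g 0%N)) => [|r /andP[br _]]; last first.
  by rewrite ltnNge (leq_trans le_ab br) ltnNge br.
rewrite !prodr_const_nat g0 expr1n mulr1 subn0 (minn_idPl le_ab).
by rewrite (_ : a - b = 0)%N ?add0n//; apply/eqP; rewrite subn_eq0.
Qed.

Section escape_products.
Context {R : realDomainType} (I : finType) (alpha beta : I -> R).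

(* For [alpha k = E(1 - V_k)] and [beta k = E(1 - V_k)^2], the probabilities
   that one individual escapes [a k] infectives of each type [k], resp. that two
   individuals escape [a k], resp. [b k], of them: the first [minn (a k) (b k)]
   infectives must miss both individuals, the others only one. *)
Definition escape_prob (a : I -> nat) := \prod_k alpha k ^+ a k.
Definition escape2_prob (a b : I -> nat) :=
  \prod_k (beta k ^+ minn (a k) (b k) * alpha k ^+ ((a k - b k) + (b k - a k))).

Hypotheses (alpha_itv01 : forall k, 0 <= alpha k <= 1)
  (alpha2_le_beta : forall k, alpha k ^+ 2 <= beta k) (beta_le1 : forall k, beta k <= 1).

Variables (a b : I -> nat).
Let c k := minn (a k) (b k).
Let p k := (a k - b k)%N.
Let q k := (b k - a k)%N.
Let Bc := \prod_k beta k ^+ c k.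
Let Bp := \prod_k beta k ^+ p k.
Let Bq := \prod_k beta k ^+ q k.
Let Ac := \prod_k alpha k ^+ c k.
Let Ap := \prod_k alpha k ^+ p k.
Let Aq := \prod_k alpha k ^+ q k.

Let prod_exprD (x : I -> R) (n1 n2 : I -> nat) :
  \prod_k x k ^+ (n1 k + n2 k) = \prod_k x k ^+ n1 k * \prod_k x k ^+ n2 k.
Proof. by rewrite -big_split; apply: eq_bigr => k _; rewrite exprD. Qed.

Let aE k : a k = (c k + p k)%N. Proof. rewrite /c /p; lia. Qed.
Let bE k : b k = (c k + q k)%N. Proof. rewrite /c /q; lia. Qed.

Let escape2_aa : escape2_prob a a = Bc * Bp.
Proof.
rewrite /escape2_prob -prod_exprD; apply: eq_bigr => k _.
by rewrite minnn subnn expr0 mulr1 {1}aE.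
Qed.

Let escape2_bb : escape2_prob b b = Bc * Bq.
Proof.
rewrite /escape2_prob -prod_exprD; apply: eq_bigr => k _.
by rewrite minnn subnn expr0 mulr1 {1}bE.
Qed.

Let escape2_ab : escape2_prob a b = Bc * (Ap * Aq).
Proof. by rewrite -prod_exprD -big_split. Qed.

Let escape2_ba : escape2_prob b a = Bc * (Ap * Aq).
Proof.
rewrite -prod_exprD -big_split; apply: eq_bigr => k _.
by rewrite /c /p /q minnC addnC.
Qed.

Let escape_a : escape_prob a = Ac * Ap.
Proof. by rewrite -prod_exprD; apply: eq_bigr => k _; rewrite aE. Qed.

Let escape_b : escape_prob b = Ac * Aq.
Proof. by rewrite -prod_exprD; apply: eq_bigr => k _; rewrite bE. Qed.

Let alpha2_beta k : 0 <= alpha k ^+ 2 <= beta k.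
Proof. by rewrite sqr_ge0 alpha2_le_beta. Qed.

Let prod_betaB_alpha2 (n : I -> nat) :
  0 <= \prod_k beta k ^+ n k - (\prod_k alpha k ^+ n k) ^+ 2 <=
       \sum_k (n k)%:R * (beta k - alpha k ^+ 2).
Proof.
have -> : (\prod_k alpha k ^+ n k) ^+ 2 = \prod_k (alpha k ^+ 2) ^+ n k.
  by rewrite -prodrXl; apply: eq_bigr => k _; rewrite exprAC.
exact: prodrXB_ge0_le.
Qed.

Let prod_alpha_itv01 (n : I -> nat) : 0 <= \prod_k alpha k ^+ n k <= 1.
Proof.
apply: prodr_itv01 => k; have /andP[alpha0 alpha1] := alpha_itv01 k.
by rewrite exprn_ge0// exprn_ile1.
Qed.

Let prod_beta_itv01 (n : I -> nat) : 0 <= \prod_k beta k ^+ n k <= 1.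
Proof.
apply: prodr_itv01 => k; have /andP[alpha0 alpha_beta] := alpha2_beta k.
by rewrite exprn_ge0 ?exprn_ile1 ?(le_trans alpha0).
Qed.

Let compl_prod_alpha (n : I -> nat) :
  1 - \prod_k alpha k ^+ n k <= \sum_k (n k)%:R * (1 - alpha k).
Proof.
have alpha01 k : 0 <= alpha k <= 1 by [].
have /andP[_] := prodrXB_ge0_le (index_enum I) n alpha01 (fun=> lexx 1).
by rewrite (eq_bigr (fun=> 1)) ?big1_eq// => k _; rewrite expr1n.
Qed.

Lemma escape2_probB_ge0_le :
  0 <= escape2_prob a b - escape_prob a * escape_prob b <=
       \sum_k (minn (a k) (b k))%:R * (beta k - alpha k ^+ 2).
Proof.
rewrite escape2_ab escape_a escape_b.
rewrite (_ : _ - _ = (Bc - Ac ^+ 2) * (Ap * Aq)); last by ring.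
have /andP[BA0 BA_le] := prod_betaB_alpha2 c.
have /andP[Ap0 Ap1] := prod_alpha_itv01 p; have /andP[Aq0 Aq1] := prod_alpha_itv01 q.
rewrite !mulr_ge0//= (le_trans _ BA_le)// ler_piMr ?mulr_ge0//.
by rewrite mulr_ile1.
Qed.

Lemma escape2_prob_incrementB_ge0_le :
  0 <= escape2_prob b b - escape2_prob b a - escape2_prob a b + escape2_prob a a
       - (escape_prob b - escape_prob a) ^+ 2 <=
  \sum_k ((a k - b k) + (b k - a k))%N%:R * (beta k - alpha k ^+ 2) +
  (\sum_k (minn (a k) (b k))%:R * (beta k - alpha k ^+ 2)) *
  (\sum_k ((a k - b k) + (b k - a k))%N%:R * (1 - alpha k)).
Proof.
rewrite escape2_aa escape2_bb escape2_ab escape2_ba escape_a escape_b.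
rewrite (_ : _ - _ = Bc * (Bp - Ap ^+ 2) + Bc * (Bq - Aq ^+ 2)
                     + (Bc - Ac ^+ 2) * (Ap - Aq) ^+ 2); last by ring.
have split_pq (x : I -> R) : \sum_k ((a k - b k) + (b k - a k))%N%:R * x k =
    \sum_k (p k)%:R * x k + \sum_k (q k)%:R * x k.
  by rewrite -big_split; apply: eq_bigr => k _; rewrite natrD mulrDl.
have /andP[BA0 BA_le] := prod_betaB_alpha2 c.
have /andP[BAp0 BAp_le] := prod_betaB_alpha2 p.
have /andP[BAq0 BAq_le] := prod_betaB_alpha2 q.
have /andP[Bc0 Bc1] := prod_beta_itv01 c.
have ApAq_le : (Ap - Aq) ^+ 2 <= \sum_k ((a k - b k) + (b k - a k))%N%:R * (1 - alpha k).
  rewrite split_pq (le_trans (sqrB_le_add_compl (prod_alpha_itv01 p) (prod_alpha_itv01 q)))//.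
  by rewrite lerD ?compl_prod_alpha.
rewrite !addr_ge0 ?(mulr_ge0 _ (sqr_ge0 _)) ?mulr_ge0//= split_pq lerD ?lerD//.
- by rewrite (le_trans _ BAp_le)// ler_piMl.
- by rewrite (le_trans _ BAq_le)// ler_piMl.
- by rewrite ler_pM// sqr_ge0.
Qed.

End escape_products.

Section bounded_expectation.
Context {d : measure_display} {T : measurableType d} {R : realType}
  (P : probability T R).

Definition bdd_mfun (f : T -> R) :=
  measurable_fun setT f /\ exists M : R, forall x, `|f x| <= M.

Lemma bdd_mfun_Lfun1 f : bdd_mfun f -> f \in Lfun P 1.
Proof.
move=> [mf [M le_M]]; apply/Lfun1_integrable.
apply: measurable_bounded_integrable => //.
  exact: (le_lt_trans (probability_le1 P measurableT) (ltry 1)).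
exists M; split; first by rewrite num_real.
by move=> y /ltW My x _; exact: le_trans (le_M x) My.
Qed.

Lemma bdd_mfun_cst c : bdd_mfun (cst c).
Proof. by split; [exact: measurable_cst | exists `|c|]. Qed.

Lemma bdd_mfun_indic A : measurable A -> bdd_mfun (\1_A).
Proof.
move=> mA; split; first exact: measurable_indic.
by exists 1 => x; rewrite indicE; case: (x \in A); rewrite ?normr1 ?normr0.
Qed.

Lemma bdd_mfun01 (f : T -> R) : measurable_fun setT f -> (forall x, 0 <= f x <= 1) ->
  bdd_mfun f.
Proof.
by move=> mf f01; split => //; exists 1 => x; have /andP[f0 f1] := f01 x; rewrite ger0_norm.
Qed.

Lemma bdd_mfunD f g : bdd_mfun f -> bdd_mfun g -> bdd_mfun (f \+ g).
Proof.
move=> [mf [M le_M]] [mg [M' le_M']]; split; first exact: measurable_funD.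
by exists (M + M') => x; rewrite (le_trans (ler_normD _ _))// lerD.
Qed.

Lemma bdd_mfunB f g : bdd_mfun f -> bdd_mfun g -> bdd_mfun (f \- g).
Proof.
move=> [mf [M le_M]] [mg [M' le_M']]; split; first exact: measurable_funB.
by exists (M + M') => x; rewrite (le_trans (ler_normB _ _))// lerD.
Qed.

Lemma bdd_mfunM f g : bdd_mfun f -> bdd_mfun g -> bdd_mfun (f \* g).
Proof.
move=> [mf [M le_M]] [mg [M' le_M']]; split; first exact: measurable_funM.
exists (`|M| * `|M'|) => x; rewrite normrM ler_pM//.
  exact: le_trans (le_M x) (ler_norm _).
exact: le_trans (le_M' x) (ler_norm _).
Qed.

Lemma bdd_mfun_prod (I : Type) (s : seq I) (F : I -> T -> R) :
  (forall p, bdd_mfun (F p)) -> bdd_mfun (fun x => \prod_(p <- s) F p x).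
Proof.
move=> bF; elim: s => [|p s IH].
  by under eq_fun do rewrite big_nil; exact: bdd_mfun_cst.
by under eq_fun do rewrite big_cons; exact: bdd_mfunM.
Qed.

Lemma bdd_mfun_sum (I : Type) (s : seq I) (F : I -> T -> R) :
  (forall p, bdd_mfun (F p)) -> bdd_mfun (fun x => \sum_(p <- s) F p x).
Proof.
move=> bF; elim: s => [|p s IH].
  by under eq_fun do rewrite big_nil; exact: bdd_mfun_cst.
by under eq_fun do rewrite big_cons; exact: bdd_mfunD.
Qed.

Lemma bdd_mfunZ k f : bdd_mfun f -> bdd_mfun (fun x => k * f x).
Proof. exact: bdd_mfunM (bdd_mfun_cst k). Qed.

Definition expectR (f : T -> R) : R := fine ('E_P[f])%E.

Lemma expectRE f : bdd_mfun f -> ('E_P[f] = (expectR f)%:E)%E.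
Proof. by move=> bf; rewrite /expectR fineK// expectation_fin_num// bdd_mfun_Lfun1. Qed.

Lemma expectR_cst c : expectR (cst c) = c.
Proof. by rewrite /expectR expectation_cst. Qed.

Lemma expectR_indic A : measurable A -> expectR (\1_A) = fine (P A).
Proof. by move=> mA; rewrite /expectR expectation_indic. Qed.

Lemma expectRD f g : bdd_mfun f -> bdd_mfun g ->
  expectR (f \+ g) = expectR f + expectR g.
Proof.
by move=> bf bg; rewrite /expectR expectationD ?bdd_mfun_Lfun1// expectRE// expectRE.
Qed.

Lemma expectRB f g : bdd_mfun f -> bdd_mfun g ->
  expectR (f \- g) = expectR f - expectR g.
Proof.
by move=> bf bg; rewrite /expectR expectationB ?bdd_mfun_Lfun1// expectRE// expectRE.
Qed.

Lemma expectRZ k f : bdd_mfun f -> expectR (fun x => k * f x) = k * expectR f.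
Proof.
move=> bf; rewrite (_ : (fun x => k * f x) = k \o* f); last first.
  by apply/funext => x /=; rewrite mulrC.
by rewrite /expectR expectationZl ?bdd_mfun_Lfun1// expectRE.
Qed.

Lemma expectR_sum (I : Type) (s : seq I) (F : I -> T -> R) :
  (forall p, bdd_mfun (F p)) ->
  expectR (fun x => \sum_(p <- s) F p x) = \sum_(p <- s) expectR (F p).
Proof.
move=> bF; elim: s => [|p s IH].
  by under eq_fun do rewrite big_nil; rewrite big_nil expectR_cst.
under eq_fun do rewrite big_cons.
by rewrite big_cons -IH -expectRD//; exact: bdd_mfun_sum.
Qed.

Lemma expectR_ge0 f : bdd_mfun f -> (forall x, 0 <= f x) -> 0 <= expectR f.
Proof. by move=> bf f0; rewrite -lee_fin -expectRE// expectation_ge0. Qed.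

Lemma expectR_le f g : bdd_mfun f -> bdd_mfun g -> (forall x, f x <= g x) ->
  expectR f <= expectR g.
Proof.
move=> bf bg fg; rewrite -subr_ge0 -expectRB//.
by apply: expectR_ge0 => [|x]; [exact: bdd_mfunB | rewrite subr_ge0].
Qed.

Lemma norm_expectR_le f c : bdd_mfun f -> (forall x, `|f x| <= c) ->
  `|expectR f| <= c.
Proof.
move=> bf le_c; have bound x : - c <= f x <= c by rewrite -ler_norml.
rewrite ler_norml; apply/andP; split.
  rewrite -[leLHS]expectR_cst; apply: expectR_le => // [|x].
    exact: bdd_mfun_cst.
  by case/andP: (bound x).
rewrite -[leRHS]expectR_cst; apply: expectR_le => // [|x].
  exact: bdd_mfun_cst.
by case/andP: (bound x).
Qed.

Lemma expectR_itv01 (f : T -> R) : measurable_fun setT f -> (forall x, 0 <= f x <= 1) ->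
  0 <= expectR f <= 1.
Proof.
move=> mf f01; have bf := bdd_mfun01 mf f01.
rewrite expectR_ge0 => [|//|x]; last by case/andP: (f01 x).
rewrite -[leRHS](expectR_cst 1).
by apply: expectR_le => // [|x]; [exact: bdd_mfun_cst | case/andP: (f01 x)].
Qed.

Lemma covariance_expectR (X Y : T -> R) : bdd_mfun X -> bdd_mfun Y ->
  covariance P X Y = (expectR (X \* Y) - expectR X * expectR Y)%:E.
Proof.
move=> bX bY; have bXY := bdd_mfunM bX bY.
rewrite covarianceE ?bdd_mfun_Lfun1//.
by rewrite (expectRE bXY) (expectRE bX) (expectRE bY) -EFinM -EFinB.
Qed.

Lemma covariance_compl_indic (A B : set T) : measurable A -> measurable B ->
  covariance P (cst 1 \- \1_A) (cst 1 \- \1_B) =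
  (fine (P (A `&` B)) - fine (P A) * fine (P B))%:E.
Proof.
move=> mA mB; have b1 : bdd_mfun (cst 1 : T -> R) := bdd_mfun_cst 1.
have bA := bdd_mfun_indic mA; have bB := bdd_mfun_indic mB.
have mAB := measurableI _ _ mA mB; have bAB := bdd_mfun_indic mAB.
have b1A := bdd_mfunB b1 bA; have b1B := bdd_mfunB b1 bB.
have b1AB := bdd_mfunB b1A bB.
rewrite covariance_expectR//; congr (_%:E).
rewrite (_ : _ \* _ = (cst 1 \- \1_A \- \1_B) \+ \1_(A `&` B)); last first.
  by apply/funext => x /=; rewrite indicI /=; ring.
by rewrite expectRD ?expectRB ?expectR_cst ?expectR_indic//; ring.
Qed.

Lemma covariance_indicB (A1 A2 B1 B2 : set T) :
  measurable A1 -> measurable A2 -> measurable B1 -> measurable B2 ->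
  covariance P (\1_A2 \- \1_A1) (\1_B2 \- \1_B1) =
  (fine (P (A2 `&` B2)) - fine (P (A2 `&` B1)) - fine (P (A1 `&` B2))
   + fine (P (A1 `&` B1)) - (fine (P A2) - fine (P A1)) * (fine (P B2) - fine (P B1)))%:E.
Proof.
move=> mA1 mA2 mB1 mB2.
have m22 := measurableI _ _ mA2 mB2; have m21 := measurableI _ _ mA2 mB1.
have m12 := measurableI _ _ mA1 mB2; have m11 := measurableI _ _ mA1 mB1.
have bI (A : set T) : measurable A -> bdd_mfun (\1_A : T -> R) := @bdd_mfun_indic A.
have b22_21 := bdd_mfunB (bI _ m22) (bI _ m21).
have b22_21_12 := bdd_mfunB b22_21 (bI _ m12).
have bA := bdd_mfunB (bI _ mA2) (bI _ mA1); have bB := bdd_mfunB (bI _ mB2) (bI _ mB1).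
rewrite covariance_expectR//.
congr (_%:E); rewrite (_ : _ \* _ = (\1_(A2 `&` B2) \- \1_(A2 `&` B1) \- \1_(A1 `&` B2))
                      \+ \1_(A1 `&` B1)); last first.
  by apply/funext => x /=; rewrite !indicI /=; ring.
by rewrite expectRD ?expectRB ?expectR_indic//; apply: bI.
Qed.

End bounded_expectation.

Section staircase.
Context {d : measure_display} {T : measurableType d} {R : realType}
  (P : probability T R).

Definition suplevel (Y : T -> R) (c : R) : set T := [set x | c <= Y x].

Lemma measurable_suplevel (Y : T -> R) c :
  measurable_fun setT Y -> measurable (suplevel Y c).
Proof.
move=> mY; have := mY measurableT `[c, +oo[%classic (measurable_itv _).
by rewrite setTI; congr measurable; apply/seteqP; split => x /=; rewrite in_itv/= andbT.
Qed.

Lemma indic_suplevel Y c x : \1_(suplevel Y c) x = ((c <= Y x)%R)%:R :> R.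
Proof.
rewrite indicE; case: (boolP (c <= Y x)) => cY; first by rewrite mem_set.
by rewrite memNset// => /= cY'; rewrite cY' in cY.
Qed.

Lemma prod_indic (I : finType) (A : I -> set T) x :
  \prod_p \1_(A p) x = \1_[set y | forall p, A p y] x :> R.
Proof.
rewrite [RHS]indicE; case: (boolP (x \in _)) => [|/negP xNA].
  by rewrite inE => xA; apply: big1 => p _; rewrite indicE mem_set.
have [p NApx] : exists p, ~ A p x by apply/existsNP => xA; apply/xNA; rewrite inE.
by rewrite (bigD1 p)//= indicE memNset// mul0r.
Qed.

Lemma measurable_forall (I : finType) (A : I -> set T) :
  (forall p, measurable (A p)) -> measurable [set x | forall p, A p x].
Proof.
move=> mA; apply/(measurable_indicP R).
rewrite (_ : \1__ = fun x => \prod_p \1_(A p) x); last first.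
  by apply/funext => x; rewrite prod_indic.
by case: (bdd_mfun_prod (index_enum I) (fun p => @bdd_mfun_indic _ _ R _ (mA p))).
Qed.

Definition stair (n : nat) (Y : T -> R) : T -> R :=
  fun x => n%:R^-1 * \sum_(r < n) \1_(suplevel Y (r.+1%:R / n%:R)) x.

Lemma stairE n Y x : (0 < n)%N -> 0 <= Y x <= 1 ->
  stair n Y x = (Num.truncn (Y x * n%:R))%:R / n%:R.
Proof.
move=> n_gt0 /andP[Y0 Y1]; rewrite /stair mulrC; congr (_ * _).
have n_gt0' : 0 < n%:R :> R by rewrite ltr0n.
under eq_bigr do rewrite indic_suplevel ler_pdivrMr// -truncn_gt_nat.
rewrite sum_ord_ltn; congr (_%:R); apply/minn_idPr.
by rewrite -{2}(@natrK R n) le_truncn// ler_piMl.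
Qed.

Lemma stair_bounds n Y x : (0 < n)%N -> 0 <= Y x <= 1 ->
  [/\ 0 <= stair n Y x, stair n Y x <= Y x & Y x - n%:R^-1 <= stair n Y x].
Proof.
move=> n_gt0 Y01; rewrite stairE//; have /andP[Y0 Y1] := Y01.
have n_gt0' : 0 < n%:R :> R by rewrite ltr0n.
have Yn_ge0 : 0 <= Y x * n%:R by rewrite mulr_ge0// ltW.
split; first by rewrite divr_ge0.
  by rewrite ler_pdivrMr// truncn_le.
rewrite ler_pdivlMr// mulrBl mulVf ?gt_eqF// lerBlDr.
by rewrite ltW// natr1 truncnS_gt.
Qed.

Lemma stair_itv01 n Y x : (0 < n)%N -> 0 <= Y x <= 1 -> 0 <= stair n Y x <= 1.
Proof.
move=> n_gt0 Y01; have [-> le_Y _] := stair_bounds n_gt0 Y01.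
by case/andP: Y01 => _ /(le_trans le_Y) ->.
Qed.

Lemma norm_stairB n Y x : (0 < n)%N -> 0 <= Y x <= 1 ->
  `|Y x - stair n Y x| <= n%:R^-1.
Proof.
move=> n_gt0 Y01; have [_ le_Y ge_Y] := stair_bounds n_gt0 Y01.
by rewrite ger0_norm ?subr_ge0// lerBlDr -lerBlDl.
Qed.

Lemma bdd_mfun_stair n (Y : T -> R) : measurable_fun setT Y -> bdd_mfun (stair n Y).
Proof.
move=> mY; apply/bdd_mfunZ/bdd_mfun_sum => r.
exact/bdd_mfun_indic/measurable_suplevel.
Qed.

Lemma expectR_stair n (Y : T -> R) : measurable_fun setT Y ->
  expectR P (stair n Y) =
  n%:R^-1 * \sum_(r < n) fine (P (suplevel Y (r.+1%:R / n%:R))).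
Proof.
move=> mY; have mS c := measurable_suplevel c mY.
rewrite /stair expectRZ; last by apply: bdd_mfun_sum => r; exact: bdd_mfun_indic.
rewrite expectR_sum; last by move=> r; exact: bdd_mfun_indic.
by congr (_ * _); apply: eq_bigr => r _; rewrite expectR_indic.
Qed.

Lemma norm_expectR_stairB n (Y : T -> R) : (0 < n)%N ->
  measurable_fun setT Y -> (forall x, 0 <= Y x <= 1) ->
  `|expectR P Y - expectR P (stair n Y)| <= n%:R^-1.
Proof.
move=> n_gt0 mY Y01; have bY := bdd_mfun01 mY Y01.
have bS := bdd_mfun_stair n mY.
rewrite -expectRB//; apply: norm_expectR_le => [|x]; first exact: bdd_mfunB.
exact: norm_stairB.
Qed.

Lemma expectR_eq_suplevel (Y1 Y2 : T -> R) :
  measurable_fun setT Y1 -> (forall x, 0 <= Y1 x <= 1) ->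
  measurable_fun setT Y2 -> (forall x, 0 <= Y2 x <= 1) ->
  (forall c, P (suplevel Y1 c) = P (suplevel Y2 c)) ->
  expectR P Y1 = expectR P Y2.
Proof.
move=> mY1 Y1_01 mY2 Y2_01 eqP12; apply/eqP; rewrite -subr_eq0; apply/eqP.
apply: (@norm_le_divn_eq0 _ _ 2) => n n_gt0.
have eq_stair : expectR P (stair n Y1) = expectR P (stair n Y2).
  by rewrite !expectR_stair//; congr (_ * _); apply: eq_bigr => r _; rewrite eqP12.
rewrite (_ : _ - _ = (expectR P Y1 - expectR P (stair n Y1))
                   - (expectR P Y2 - expectR P (stair n Y2))); last first.
  by rewrite eq_stair; ring.
rewrite (le_trans (ler_normB _ _))// mulr_natl mulr2n.
by rewrite lerD// norm_expectR_stairB.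
Qed.

Section product.
Variables (I : finType) (Y : I -> T -> R).
Hypotheses (mY : forall p, measurable_fun setT (Y p)) (Y01 : forall p x, 0 <= Y p x <= 1).
Hypothesis indepY : forall r : I -> R,
  P [set x | forall p, r p <= Y p x] = (\prod_p P (suplevel (Y p) (r p)))%E.

Lemma expectR_prod_stair n :
  expectR P (fun x => \prod_p stair n (Y p) x) = \prod_p expectR P (stair n (Y p)).
Proof.
have mS p c := measurable_suplevel c (mY p).
pose B (f : {ffun I -> 'I_n}) := [set x | forall p, (f p).+1%:R / n%:R <= Y p x].
have mB f : measurable (B f) by apply: measurable_forall => p; exact: mS.
pose c := \prod_(p : I) n%:R^-1 : R.
have -> : (fun x => \prod_p stair n (Y p) x) =
          (fun x => \sum_(f : {ffun I -> 'I_n}) c * \1_(B f) x).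
  apply/funext => x; under eq_bigr do rewrite /stair mulr_sumr.
  rewrite bigA_distr_bigA /=; apply: eq_bigr => f _.
  by rewrite big_split /= prod_indic.
rewrite expectR_sum => [|f]; last exact/bdd_mfunZ/bdd_mfun_indic.
under [RHS]eq_bigr do rewrite expectR_stair// mulr_sumr.
rewrite bigA_distr_bigA /=; apply: eq_bigr => f _.
rewrite expectRZ ?expectR_indic//; last exact: bdd_mfun_indic.
rewrite big_split /= indepY; congr (_ * _).
rewrite -[RHS]/(fine (\prod_p fine (P (suplevel (Y p) ((f p).+1%:R / n%:R))))%:E).
by rewrite -prodEFin; congr fine; apply: eq_bigr => p _; rewrite fineK// fin_num_measure.
Qed.

Lemma expectR_prod_indep :
  expectR P (fun x => \prod_p Y p x) = \prod_p expectR P (Y p).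
Proof.
apply/eqP; rewrite -subr_eq0; apply/eqP.
apply: (@norm_le_divn_eq0 _ _ (2 * #|I|%:R)) => n n_gt0.
have bY p := bdd_mfun01 (mY p) (Y01 p).
have bS p := bdd_mfun_stair n (mY p).
have S01 p x : 0 <= stair n (Y p) x <= 1 by exact: stair_itv01.
have EY01 p : 0 <= expectR P (Y p) <= 1 by exact: expectR_itv01.
have ES01 p : 0 <= expectR P (stair n (Y p)) <= 1.
  by apply: expectR_itv01 => [|x]; [case: (bS p) | exact: S01].
rewrite (_ : _ - _ =
  (expectR P (fun x => \prod_p Y p x) - expectR P (fun x => \prod_p stair n (Y p) x))
  - (\prod_p expectR P (Y p) - \prod_p expectR P (stair n (Y p)))); last first.
  by rewrite expectR_prod_stair; ring.
have sum_inv : \sum_(p : I) n%:R^-1 = #|I|%:R * n%:R^-1 :> R.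
  by rewrite sumr_const mulr_natl.
have bprodY := bdd_mfun_prod (index_enum I) bY.
have bprodS := bdd_mfun_prod (index_enum I) bS.
rewrite (le_trans (ler_normB _ _))// -mulrA mulr_natl mulr2n -sum_inv lerD//.
  rewrite -expectRB//; apply: norm_expectR_le => [|x /=]; first exact: bdd_mfunB.
  rewrite (le_trans (normr_prodrB_le _ (Y01^~ x) (S01^~ x)))//.
  by apply: ler_sum => p _; exact: norm_stairB.
rewrite (le_trans (normr_prodrB_le _ EY01 ES01))//.
by apply: ler_sum => p _; exact: norm_expectR_stairB.
Qed.

End product.

End staircase.

Definition escape_pow {R : pzRingType} (e : nat) (v : R) := (1 - v) ^+ e.

Lemma measurable_escape_pow {R : realType} e : measurable_fun setT (@escape_pow R e).
Proof. by apply/measurable_funX/measurable_funB => //; exact: measurable_cst. Qed.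

Lemma escape_pow_itv01 {R : realType} e (v : R) : 0 <= v <= 1 ->
  0 <= escape_pow e v <= 1.
Proof.
case/andP => v0 v1; rewrite /escape_pow exprn_ge0 ?subr_ge0//= exprn_ile1 ?subr_ge0//.
by rewrite lerBlDr lerDl.
Qed.

Section infectivity.
Context {d : measure_display} {T : measurableType d} {R : realType}
  (P : probability T R) {m : nat} (V : 'I_m -> nat -> 'I_m -> T -> R).
Hypothesis hV : infectivity_vectors P V.
Variable i : 'I_m.

Lemma measurable_V k l i' : measurable_fun setT (V k l i').
Proof. by case: hV => mV _ _ _; exact: mV. Qed.

Lemma V_itv01 k l i' x : 0 <= V k l i' x <= 1.
Proof. by case: hV => _ V01 _ _; exact: V01. Qed.

Lemma measurable_escape_powV e k l :
  measurable_fun setT (fun x => escape_pow e (V k l i x)).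
Proof. exact: measurableT_comp (measurable_escape_pow e) (measurable_V k l i). Qed.

(* The product rule of [infectivity_vectors], applied to the distinct vectors
   [(k, l)], [l < L], with events constraining only the [i]-th coordinate. *)
Lemma P_V_indep L (B : 'I_m * 'I_L -> set R) : (forall p, measurable (B p)) ->
  P [set x | forall p, B p (V p.1 p.2 i x)] =
  (\prod_p P [set x | B p (V p.1 p.2 i x)])%E.
Proof.
case: hV => _ _ indepV _ mB.
have pair_inj (p p' : 'I_m * 'I_L) : p'.1 = p.1 -> val p'.2 = val p.2 -> p' = p.
  by case: p p' => [k l] [k' l'] /= -> /val_inj ->.
pose F := [seq (p.1, val p.2) | p <- index_enum ('I_m * 'I_L)%type].
pose A k l i' := if i' == i then
  [set v | forall p : 'I_m * 'I_L, (p.1, val p.2) = (k, l) -> B p v] else setT.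
have mA k l i' : measurable (A k l i').
  rewrite /A; case: ifP => _ //; apply: (@measurable_forall _ _ R) => p.
  case: (pselect ((p.1, val p.2) = (k, l))) => [pkl|Npkl].
    rewrite [X in measurable X](_ : _ = B p) ?mB//.
    by apply/seteqP; split => v /=; [exact | move=> + _].
  rewrite [X in measurable X](_ : _ = setT)//.
  by apply/seteqP; split => v //= _ /Npkl.
have uniqF : uniq F.
  by rewrite map_inj_uniq ?index_enum_uniq// => -[k1 l1] [k2 l2] /= [-> /val_inj ->].
have := indepV F A uniqF mA; rewrite big_map.
have <- : [set x | forall p, p \in F -> Vevent V p.1 p.2 (A p.1 p.2) x] =
          [set x | forall p, B p (V p.1 p.2 i x)].
  apply/seteqP; split => x /=.
    move=> AF p; have := AF (p.1, val p.2) (map_f _ (mem_index_enum p)) i.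
    by rewrite /A eqxx; apply.
  move=> BV _ /mapP[p _ ->] i' /=; rewrite /A; case: ifP => [/eqP -> | _ //] p' [e1 e2].
  by rewrite (pair_inj _ _ e1 e2).
move=> ->; apply: eq_bigr => p _; congr (P _); apply/seteqP; split => x /=.
  by move/(_ i); rewrite /A eqxx; apply.
move=> BV i'; rewrite /A; case: ifP => [/eqP -> | //] p' [e1 e2].
by rewrite (pair_inj _ _ e1 e2).
Qed.

Lemma P_V_shift k l (B : set R) : measurable B ->
  P [set x | B (V k l i x)] = P [set x | B (V k 0 i x)].
Proof.
case: hV => _ _ _ identV mB.
pose A i' := if i' == i then B else setT.
have VeventE l' : Vevent V k l' A = [set x | B (V k l' i x)].
  apply/seteqP; split => x /=; first by move/(_ i); rewrite /A eqxx.
  by move=> BV i'; rewrite /A; case: ifP => [/eqP -> //|_ //].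
by rewrite -!VeventE identV// => i'; rewrite /A; case: ifP.
Qed.

Definition escape_moment k e := expectR P (fun x => escape_pow e (V k 0 i x)).

Lemma expectR_escape_powV k l e :
  expectR P (fun x => escape_pow e (V k l i x)) = escape_moment k e.
Proof.
have escape_pow01 l' x : 0 <= escape_pow e (V k l' i x) <= 1.
  exact/escape_pow_itv01/V_itv01.
apply: expectR_eq_suplevel => // [||c]; try exact: measurable_escape_powV.
exact: (P_V_shift k l (measurable_suplevel (T:=R) c (measurable_escape_pow e))).
Qed.

Lemma expectR_prod_escape_powV L (e : 'I_m * 'I_L -> nat) :
  expectR P (fun x => \prod_p escape_pow (e p) (V p.1 p.2 i x)) =
  \prod_p escape_moment p.1 (e p).
Proof.
rewrite expectR_prod_indep => [||p x|r].
- by apply: eq_bigr => p _; exact: expectR_escape_powV.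
- by move=> p; exact: measurable_escape_powV.
- exact/escape_pow_itv01/V_itv01.
exact: (P_V_indep (fun p => measurable_suplevel (T:=R) (r p) (measurable_escape_pow (e p)))).
Qed.

Lemma escape_moment0 k : escape_moment k 0 = 1.
Proof.
rewrite /escape_moment (_ : (fun x => _) = cst 1); first exact: expectR_cst.
by apply/funext => x; rewrite /escape_pow expr0.
Qed.

Lemma escape_moment_itv01 k e : 0 <= escape_moment k e <= 1.
Proof.
apply: expectR_itv01 => [|x]; first exact: measurable_escape_powV.
exact/escape_pow_itv01/V_itv01.
Qed.

Lemma mu_ge0 k : 0 <= mu_ P V k i.
Proof. by case/andP: (expectR_itv01 P (measurable_V k 0 i) (V_itv01 k 0 i)). Qed.

Lemma lambda_ge0 k : 0 <= lambda_ P V k i.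
Proof. exact/fine_ge0/variance_ge0. Qed.

Lemma escape_moment1E k : escape_moment k 1 = 1 - mu_ P V k i.
Proof.
have bV := bdd_mfun01 (measurable_V k 0 i) (V_itv01 k 0 i).
rewrite /escape_moment (_ : (fun x => _) = cst 1 \- V k 0 i); last first.
  by apply/funext => x; rewrite /escape_pow expr1.
by rewrite expectRB ?(expectR_cst P)//; exact: bdd_mfun_cst.
Qed.

Lemma escape_moment2E k :
  escape_moment k 2 - escape_moment k 1 ^+ 2 = lambda_ P V k i.
Proof.
have bV := bdd_mfun01 (measurable_V k 0 i) (V_itv01 k 0 i).
have b1 : bdd_mfun (cst 1 : T -> R) := bdd_mfun_cst 1.
have b1V := bdd_mfunB b1 bV; have b1VV := bdd_mfunB b1V bV.
have bVV := bdd_mfunM bV bV.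
rewrite /lambda_ /variance covariance_expectR//= escape_moment1E /escape_moment.
rewrite (_ : (fun x => _) = (cst 1 \- V k 0 i \- V k 0 i) \+ V k 0 i \* V k 0 i).
  by rewrite expectRD ?expectRB ?(expectR_cst P)// /mu_ -/(expectR P _); ring.
by apply/funext => x; rewrite /escape_pow /=; ring.
Qed.

End infectivity.

Definition ninfectives {R : realType} {m : nat} (N : 'I_m -> nat) (pi t : 'I_m -> R)
    (k : 'I_m) : nat :=
  Num.truncn (t k * Ntilde N pi k).

Section ninfectives.
Context {R : realType} {m : nat} (N : 'I_m -> nat) (pi : 'I_m -> R).
Hypothesis pi_ge0 : forall k, 0 <= pi k.
Variables (t u : 'I_m -> R).
Hypotheses (t_ge0 : forall k, 0 <= t k) (u_ge0 : forall k, 0 <= u k).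
Let a := ninfectives N pi t.
Let b := ninfectives N pi u.

Let Ntilde_ge0 k : 0 <= Ntilde N pi k. Proof. exact: mulr_ge0. Qed.

Lemma sum_minn_ninfectives_le (x : 'I_m -> R) : (forall k, 0 <= x k) ->
  \sum_k (minn (a k) (b k))%:R * x k <= \sum_k Num.min (t k) (u k) * Ntilde N pi k * x k.
Proof.
move=> x_ge0; apply: ler_sum => k _; rewrite ler_wpM2r// minr_pMl// -truncn_min.
by rewrite truncn_le le_min; apply/andP; split; apply: mulr_ge0.
Qed.

Lemma sum_ninfectives_maxB_min (x : 'I_m -> R) :
  \sum_k ((Num.truncn (Num.max (t k) (u k) * Ntilde N pi k))%:R
         - (Num.truncn (Num.min (t k) (u k) * Ntilde N pi k))%:R) * x k =
  \sum_k ((a k - b k) + (b k - a k))%N%:R * x k.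
Proof.
by apply: eq_bigr => k _; rewrite maxr_pMl ?minr_pMl// natr_truncn_maxB_min.
Qed.

End ninfectives.

Section contacts.
Context {d : measure_display} {T : measurableType d} {R : realType}
  (P : probability T R) {m : nat} (N : 'I_m -> nat)
  (V : 'I_m -> nat -> 'I_m -> T -> R)
  (C : 'I_m -> nat -> 'I_m -> nat -> T -> bool).
Hypotheses (hV : infectivity_vectors P V) (hC : contact_model P N V C).
Variable i : 'I_m.

Definition escape (a : 'I_m -> nat) (j : nat) : set T :=
  [set x | forall k l, (l < a k)%N -> C k l i j x = false].

Lemma measurable_escape a j : measurable (escape a j).
Proof.
have mC k l : measurable [set x | C k l i j x] by case: hC.
rewrite [X in measurable X](_ : _ = [set x | forall k,
   (\bigcap_l [set x | (l < a k)%N -> C k l i j x = false]) x]).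
  apply: (@measurable_forall _ _ R) => k; apply: bigcapT_measurable => l.
  have [lt_la|le_al] := ltnP l (a k).
    rewrite [X in measurable X](_ : _ = ~` [set x | C k l i j x]).
      exact: measurableC.
    by apply/seteqP; split => x /=; [move/(_ isT) => -> | move=> NC _; exact/negbTE/negP].
  rewrite [X in measurable X](_ : _ = setT)//.
  by apply/seteqP; split => x //= _; rewrite ltnNge le_al.
by apply/seteqP; split => x /= escx k l; [move=> _|]; exact: escx.
Qed.

Lemma chi_escape (pi : 'I_m -> R) j (t : 'I_m -> R) :
  chi N pi C i j t = cst 1 \- \1_(escape (ninfectives N pi t) j).
Proof.
apply/funext => x; rewrite /chi /= !indicE.
have [escx|/negP Nescx] := boolP (x \in escape _ j).
  rewrite memNset ?subrr// => -[k [l [lt_l Cx]]].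
  by move: escx; rewrite inE => /(_ k l lt_l); rewrite Cx.
rewrite mem_set ?subr0//; apply: contrapT => Ncontact; apply: Nescx.
rewrite inE => k l lt_l; apply/negbTE/negP => Cx.
by apply: Ncontact; exists k, l.
Qed.

Definition contacts (a : 'I_m -> nat) (j : nat) :
    seq (('I_m * nat) * ('I_m * nat)) :=
  [seq ((k, l), (i, j)) | k <- index_enum 'I_m, l <- index_iota 0 (a k)].

Lemma mem_contacts q a j :
  reflect (exists k l, (l < a k)%N /\ q = ((k, l), (i, j))) (q \in contacts a j).
Proof.
apply: (iffP allpairsPdep).
  by move=> [k [l [_ la ->]]]; exists k, l; rewrite mem_index_iota in la.
by move=> [k [l [la ->]]]; exists k, l; rewrite mem_index_enum mem_index_iota.
Qed.

Lemma uniq_contacts a j : uniq (contacts a j).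
Proof.
apply: allpairs_uniq_dep => [|k _|]; [exact: index_enum_uniq | exact: iota_uniq |].
by move=> [k1 l1] [k2 l2] _ _ /= [-> ->].
Qed.

Lemma prod_contacts a j x L : (forall k, a k <= L)%N ->
  \prod_(q <- contacts a j) (1 - V q.1.1 q.1.2 q.2.1 x) =
  \prod_(k < m) \prod_(l < L) (1 - V k l i x) ^+ (l < a k)%N.
Proof.
move=> aL; rewrite big_allpairs_dep /=; apply: eq_bigr => k _.
rewrite (big_mkord xpredT (fun l => 1 - V k l i x)).
rewrite (big_ord_widen L (fun l => 1 - V k l i x) (aL k)) big_mkcond /=.
by apply: eq_bigr => l _; case: (l < a k)%N; rewrite ?expr1 ?expr0.
Qed.

Lemma prod_contacts2 a b j l x L : (forall k, a k <= L)%N -> (forall k, b k <= L)%N ->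
  \prod_(q <- contacts a j ++ contacts b l) (1 - V q.1.1 q.1.2 q.2.1 x) =
  \prod_(p : 'I_m * 'I_L) escape_pow ((p.2 < a p.1) + (p.2 < b p.1))%N (V p.1 p.2 i x).
Proof.
move=> aL bL; rewrite big_cat /= (prod_contacts _ _ aL) (prod_contacts _ _ bL).
rewrite -big_split /=; under eq_bigr do rewrite -big_split /=.
by rewrite pair_big /=; apply: eq_bigr => -[k r] _; rewrite /escape_pow exprD.
Qed.

Let alpha k := escape_moment P V i k 1.
Let beta k := escape_moment P V i k 2.

(* The contact model turns the probability into the expectation of a product
   of factors [1 - V]; grouped by infective [(k, l)] they give
   [(1 - V_(k,l),i)^e] with [e] the number of the two individuals it must miss,
   and these are independent across infectives. *)
Lemma P_escape2 a b j l : j != l -> (j < N i)%N -> (l < N i)%N ->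
  P (escape a j `&` escape b l) = (escape2_prob alpha beta a b)%:E.
Proof.
move=> jl jN lN; case: hC => _ contactsC.
pose S := contacts a j ++ contacts b l.
pose L := (\sum_(k < m) (a k + b k))%N.
have aL k : (a k <= L)%N by rewrite /L (bigD1 k)//= -addnA leq_addr.
have bL k : (b k <= L)%N.
  by rewrite /L (bigD1 k)//= (leq_trans (leq_addl (a k) _) (leq_addr _ _)).
have uniqS : uniq S.
  rewrite cat_uniq !uniq_contacts andbT /=.
  apply/hasPn => q /mem_contacts[k [l' [_ ->]]].
  by apply/negP => /mem_contacts[k' [l'' [_ [_ _ ejl]]]]; rewrite ejl eqxx in jl.
have NS q : q \in S -> (q.2.2 < N q.2.1)%N.
  by rewrite mem_cat => /orP[] /mem_contacts[k [l' [_ ->]]].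
have := contactsC [::] (fun _ _ _ => setT) S (fun=> false) (fun _ _ _ => measurableT) uniqS NS.
rewrite (_ : [set x | _] = escape a j `&` escape b l); last first.
  apply/seteqP; split => x /=.
    move=> [_ missS]; split => k l' lt_l'.
      apply: (missS ((k, l'), (i, j))).
      by rewrite mem_cat; apply/orP; left; apply/mem_contacts; exists k, l'.
    apply: (missS ((k, l'), (i, l))).
    by rewrite mem_cat; apply/orP; right; apply/mem_contacts; exists k, l'.
  move=> [escj escl]; split => // q.
  by rewrite mem_cat => /orP[] /mem_contacts[k [l' [lt_l' ->]]]; [exact: escj|exact: escl].
move=> ->; pose e (p : 'I_m * 'I_L) := ((p.2 < a p.1) + (p.2 < b p.1))%N.
rewrite (_ : (fun x => _) = fun x => \prod_p escape_pow (e p) (V p.1 p.2 i x)); last first.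
  by apply/funext => x; rewrite big_nil mul1r (prod_contacts2 _ _ _ aL bL).
rewrite expectRE; last first.
  apply: bdd_mfun_prod => p; apply: bdd_mfun01 => [|x].
    exact: (measurable_escape_powV hV).
  exact/escape_pow_itv01/(V_itv01 hV).
rewrite expectR_prod_escape_powV//; congr (_%:E).
rewrite -(pair_big xpredT xpredT (fun k (r : 'I_L) => escape_moment P V i k (e (k, r)))).
by apply: eq_bigr => k _; apply: prod_ord_ltn2; rewrite ?escape_moment0.
Qed.

(* [l] only serves as a second individual, with nobody to escape, in
   [P_escape2]. *)
Lemma P_escape a j l : j != l -> (j < N i)%N -> (l < N i)%N ->
  fine (P (escape a j)) = escape_prob alpha a.
Proof.
move=> jl jN lN; rewrite -(setIT (escape a j)).
rewrite (_ : setT = escape (fun=> 0%N) l); last first.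
  by apply/seteqP; split => x // _ k l'.
rewrite P_escape2//=; apply: eq_bigr => k _.
by rewrite minn0 subn0 sub0n addn0 expr0 mul1r.
Qed.

End contacts.

Section chi_covariance.
Context {d : measure_display} {T : measurableType d} {R : realType}
  (P : probability T R) {m : nat} (N : 'I_m -> nat) (pi : 'I_m -> R)
  (V : 'I_m -> nat -> 'I_m -> T -> R)
  (C : 'I_m -> nat -> 'I_m -> nat -> T -> bool).
Hypotheses (hV : infectivity_vectors P V) (hC : contact_model P N V C).
Variables (i : 'I_m) (j l : nat).
Hypotheses (jl : j != l) (jN : (j < N i)%N) (lN : (l < N i)%N).
Variables (t u : 'I_m -> R).

Let mescape := measurable_escape hC i.
Let lj : l != j. Proof. by rewrite eq_sym. Qed.

Let alpha k := escape_moment P V i k 1.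
Let beta k := escape_moment P V i k 2.
Let a := ninfectives N pi t.
Let b := ninfectives N pi u.
Let dist k := ((a k - b k) + (b k - a k))%N.

Lemma covariance_chi : covariance P (chi N pi C i j t) (chi N pi C i l u) =
  (escape2_prob alpha beta a b - escape_prob alpha a * escape_prob alpha b)%:E.
Proof.
rewrite !chi_escape (covariance_compl_indic P (mescape _ _) (mescape _ _)).
by rewrite (P_escape2 hV hC)// (P_escape hV hC _ jl)// (P_escape hV hC _ lj).
Qed.

Lemma covariance_chi_increments :
  covariance P (chi N pi C i j t \- chi N pi C i j u) (chi N pi C i l t \- chi N pi C i l u) =
  (escape2_prob alpha beta b b - escape2_prob alpha beta b a
   - escape2_prob alpha beta a b + escape2_prob alpha beta a a
   - (escape_prob alpha b - escape_prob alpha a) ^+ 2)%:E.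
Proof.
have complB (A1 A2 : set T) :
    (cst 1 \- \1_A1) \- (cst 1 \- \1_A2) = \1_A2 \- \1_A1 :> (T -> R).
  by apply/funext => x /=; ring.
rewrite !chi_escape !complB.
rewrite (covariance_indicB P (mescape _ _) (mescape _ _) (mescape _ _) (mescape _ _)).
rewrite !(P_escape2 hV hC)// !(P_escape hV hC _ jl)//.
by rewrite !(P_escape hV hC _ lj)// expr2.
Qed.

Let alpha_itv01 k : 0 <= alpha k <= 1. Proof. exact: escape_moment_itv01. Qed.
Let beta_le1 k : beta k <= 1. Proof. by case/andP: (escape_moment_itv01 hV i k 2). Qed.
Let beta_alpha2 k : beta k - alpha k ^+ 2 = lambda_ P V k i.
Proof. exact: escape_moment2E. Qed.
Let alpha2_le_beta k : alpha k ^+ 2 <= beta k.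
Proof. by rewrite -subr_ge0 beta_alpha2 lambda_ge0. Qed.

Let sum_beta_alpha2 (n : 'I_m -> nat) :
  \sum_k (n k)%:R * (beta k - alpha k ^+ 2) = \sum_k (n k)%:R * lambda_ P V k i.
Proof. by apply: eq_bigr => k _; rewrite beta_alpha2. Qed.

Let sum_compl_alpha (n : 'I_m -> nat) :
  \sum_k (n k)%:R * (1 - alpha k) = \sum_k (n k)%:R * mu_ P V k i.
Proof. by apply: eq_bigr => k _; rewrite /alpha (escape_moment1E hV) opprB addrC subrK. Qed.

Lemma covariance_chi_ge0_le :
  (0 <= covariance P (chi N pi C i j t) (chi N pi C i l u) <=
   (\sum_k (minn (a k) (b k))%:R * lambda_ P V k i)%:E)%E.
Proof.
rewrite covariance_chi !lee_fin.
by rewrite -sum_beta_alpha2 escape2_probB_ge0_le.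
Qed.

Lemma abs_covariance_chi_increments_le :
  (`|covariance P (chi N pi C i j t \- chi N pi C i j u)
                  (chi N pi C i l t \- chi N pi C i l u)| <=
   (\sum_k (dist k)%:R * lambda_ P V k i +
    (\sum_k (minn (a k) (b k))%:R * lambda_ P V k i) *
    (\sum_k (dist k)%:R * mu_ P V k i))%:E)%E.
Proof.
rewrite covariance_chi_increments abse_EFin lee_fin.
have /andP[incr_ge0] := escape2_prob_incrementB_ge0_le alpha_itv01 alpha2_le_beta beta_le1 a b.
by rewrite !sum_beta_alpha2 sum_compl_alpha ger0_norm.
Qed.

End chi_covariance.

Theorem lemma3p1 (d : measure_display) (T : measurableType d) (R : realType)
  (P : probability T R) (m : nat) (hm : (0 < m)%N)
  (N : 'I_m -> nat) (hN : forall i, (0 < N i)%N)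
  (pi : 'I_m -> R) (hpi : forall i, 0 < pi i)
  (V : 'I_m -> nat -> 'I_m -> T -> R)
  (C : 'I_m -> nat -> 'I_m -> nat -> T -> bool)
  (hV : infectivity_vectors P V) (hC : contact_model P N V C)
  (i : 'I_m) (j l : nat) (hjl : (j < l)%N) (hl : (l < N i)%N)
  (t u : 'I_m -> R) (ht : forall k, 0 <= t k) (hu : forall k, 0 <= u k) :
  let Nt := Ntilde N pi in
  let Dk := fun k => (Num.truncn (Num.max (t k) (u k) * Nt k))%:R
                     - (Num.truncn (Num.min (t k) (u k) * Nt k))%:R in
  let B := \sum_(k < m) Num.min (t k) (u k) * Nt k * lambda_ P V k i in
  [/\ (0 <= covariance P (chi N pi C i j t) (chi N pi C i l u))%E,
      (covariance P (chi N pi C i j t) (chi N pi C i l u) <= B%:E)%E &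
      (`| covariance P (chi N pi C i j t \- chi N pi C i j u)
                       (chi N pi C i l t \- chi N pi C i l u) |
       <= (6 * (\sum_(k < m) Dk k * mu_ P V k i) * B
           + 2 * \sum_(k < m) Dk k * lambda_ P V k i)%:E)%E].
Proof.
move=> Nt Dk B.
have jl : j != l by rewrite ltn_eqF.
have jN : (j < N i)%N := ltn_trans hjl hl.
have pi_ge0 k : 0 <= pi k := ltW (hpi k).
have min_le_B : _ <= B := sum_minn_ninfectives_le N pi_ge0 ht hu (lambda_ge0 P V i).
have /andP[cov_ge0 cov_le] := covariance_chi_ge0_le pi hV hC jl jN hl t u.
split => //; first exact: (le_trans cov_le).
rewrite (le_trans (abs_covariance_chi_increments_le pi hV hC jl jN hl t u))// lee_fin.
rewrite /Dk !sum_ninfectives_maxB_min//.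
set X1 := \sum_k _ * lambda_ P V k i; set X3 := \sum_k _ * mu_ P V k i.
set Y := \sum_k _ * lambda_ P V k i in min_le_B *.
have Y_ge0 : 0 <= Y by apply: sumr_ge0 => k _; rewrite mulr_ge0 ?lambda_ge0.
have X1_ge0 : 0 <= X1 by apply: sumr_ge0 => k _; rewrite mulr_ge0 ?lambda_ge0.
have X3_ge0 : 0 <= X3 by apply: sumr_ge0 => k _; rewrite mulr_ge0 ?(mu_ge0 hV).
nra.
Qed.
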